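(* Let $n,T,p\ge 1$, let $\alpha\in(0,\tfrac12)$, $\pi>1$, $c>0$, and let $\bar c\ge \underline{c}>0$ and $c_m>0$ be constants. Suppose the covariate vectors $X^{zt}\in[0,1]^p$ ($z\in[n]$, $t\in[T]$) satisfy the following coverage condition: for every pair $x^{(1)}\le x^{(2)}$ in $[0,1]^p$ (componentwise), with $V:=\prod_{j=1}^p (x^{(2)}_j-x^{(1)}_j)$ and $M:=\sqrt{\frac{\ln(nT)(p+1)}{\min(n,T)}}$, $$\underline{c}\,V-c_mM\;\le\;\frac{\#\{(z,t): x^{(1)}\le X^{zt}\le x^{(2)}\}}{nT}\;\le\;\bar c\,V+c_mM .$$ Let $\mathbb T$ be an $\alpha$-regular, fair-split regression tree (with parameter $\pi$) on the $nT$ observations, with $\ell$ leaves, each of depth at least $c\log \ell$, and suppose $\ell\le \left(\frac{\alpha}{2c_mM}\right)^{\frac{1}{c\log(1/\alpha)}}$. Let $\mathcal T_1^\star,\dots,\mathcal T_q^\star:[0,1]^p\to\mathbb R$ be Lipschitz functions, $\mathcal T_i^\star$ having Lipschitz constant $L_i$. Then for each $i\in[q]$ and each leaf of $\mathbb T$, letting $C$ be the set of observations in that leaf, $$\max_{(z_1,t_1),(z_2,t_2)\in C}\left|\mathcal T_i^\star(X^{z_1t_1})-\mathcal T_i^\star(X^{z_2t_2})\right|\le \frac{2L_i\sqrt p}{\ell^{s}},\qquad s:=\frac{c}{(\pi+1)p}\cdot\frac{\alpha\,\underline{c}}{4\bar c}.$$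
   Context: Panel data: $n$ units observed over $T$ time periods; observation $(z,t)$ has covariate vector $X^{zt}=(X_{1zt},\dots,X_{pzt})\in[0,1]^p$. There are $q$ treatments encoded by binary matrices $W_1,\dots,W_q\in\{0,1\}^{n\times T}$ (entry $(z,t)$ is 1 if observation $(z,t)$ receives the treatment); $\mathcal T_i^\star(X^{zt})$ is the effect of treatment $i$ on observation $(z,t)$. A regression tree here is a binary tree whose root contains all $nT$ observations and each internal node splits its set of observations into two children by comparing a single covariate $j$ to a threshold $x$ (observations with $X_{jzt}\le x$ versus $X_{jzt}>x$); the leaves partition the observations into clusters. The tree is $\alpha$-regular if every split sends at least a fraction $\alpha$ of the node's observations to each child, and each child contains at least one treated observation. The tree is a fair-split tree (with parameter $\pi>1$) if, for any node, whenever a covariate $j$ has not been used in the splits of its last $\pi p$ ancestor nodes, the next split at that node must use covariate $j$ (ties between several such covariates broken arbitrarily). Lipschitz is with respect to the Euclidean norm. *)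

From HB Require Import structures.
From mathcomp Require Import all_boot all_order all_algebra.
From mathcomp Require Import all_classical all_reals all_analysis.
Set Implicit Arguments. Unset Strict Implicit. Unset Printing Implicit Defensive.
Import Order.TTheory GRing.Theory Num.Theory.
Local Open Scope ring_scope.

(* A regression tree: a leaf, or an internal node splitting on covariate j at
   threshold x (left child: X_j <= x, right child: X_j > x). *)
Inductive tree (R : Type) (p : nat) :=
  | Leaf
  | Node of 'I_p & R & tree R p & tree R p.
Arguments Leaf {R p}.

Section Trees.
Variables (R : realType) (n T p q : nat).
Variable X : 'I_n -> 'I_T -> 'I_p -> R.
Variable W : 'I_q -> 'I_n -> 'I_T -> bool.

Definition obs := ('I_n * 'I_T)%type.

Definition left_set (S : {set obs}) (j : 'I_p) (x : R) : {set obs} :=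
  [set o in S | X o.1 o.2 j <= x].
Definition right_set (S : {set obs}) (j : 'I_p) (x : R) : {set obs} :=
  [set o in S | x < X o.1 o.2 j].

Fixpoint leaves (t : tree R p) (S : {set obs}) (d : nat) : seq ({set obs} * nat) :=
  match t with
  | Leaf => [:: (S, d)]
  | Node j x l r => leaves l (left_set S j x) d.+1 ++ leaves r (right_set S j x) d.+1
  end.

Definition treated (o : obs) : Prop := exists i : 'I_q, W i o.1 o.2 = true.

Fixpoint regular (alpha : R) (t : tree R p) (S : {set obs}) : Prop :=
  match t with
  | Leaf => True
  | Node j x l r =>
      [/\ alpha * #|S|%:R <= #|left_set S j x|%:R,
          alpha * #|S|%:R <= #|right_set S j x|%:R,
          (exists o, o \in left_set S j x /\ treated o) &
          (exists o, o \in right_set S j x /\ treated o)] /\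
      regular alpha l (left_set S j x) /\
      regular alpha r (right_set S j x)
  end.

(* hist = covariates used in the splits of the ancestors, most recent (parent) first.
   Covariate k is unused in the last pi*p ancestors. *)
Definition unused_recent (pi : R) (hist : seq 'I_p) (k : 'I_p) : Prop :=
  forall i : nat, (i < size hist)%N -> (i.+1)%:R <= pi * p%:R -> nth k hist i != k.

Fixpoint fair_split (pi : R) (t : tree R p) (hist : seq 'I_p) : Prop :=
  match t with
  | Leaf => True
  | Node j x l r =>
      [/\ (pi * p%:R <= (size hist)%:R ->
             (exists k, unused_recent pi hist k) -> unused_recent pi hist j),
          fair_split pi l (j :: hist) &
          fair_split pi r (j :: hist)]
  end.

End Trees.

From HB Require Import structures.
From mathcomp Require Import all_boot all_order all_algebra.
From mathcomp Require Import all_classical all_reals all_analysis.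
From mathcomp Require Import lra ring zify.
Import Order.TTheory GRing.Theory Num.Theory.
Local Open Scope ring_scope.
Set Implicit Arguments. Unset Strict Implicit. Unset Printing Implicit Defensive.

(* Every cell of the tree is cut out of the observations by a box, and the coverage
   condition compares cell sizes with box volumes.  When a node holding many points
   is split on covariate [j] into two children each holding an [alpha]-fraction of
   them, the lower coverage bound for the node and the upper one for a child force
   that child to keep a fraction [beta = alpha cund / (4 cbar)] of the node's extent
   in direction [j]; so the other child loses that fraction.  The bound on [ell]
   keeps nodes populous enough for this down to depth about [c log ell].  The
   fair-split rule puts every covariate in every window of about [(pi + 1) p]
   consecutive splits, so along the path to a leaf each direction contracts about
   [c log ell / ((pi + 1) p)] times, leaving a width of at most [2 ell^-s]; the
   Lipschitz bound turns these widths into the claimed oscillation. *)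

Section BoundingBox.
Variables (R : realType) (p : nat) (O : finType) (x : O -> 'I_p -> R).
Hypothesis x01 : forall o k, 0 <= x o k <= 1.

Definition box (a b : 'I_p -> R) : {set O} :=
  [set o | [forall k, (a k <= x o k) && (x o k <= b k)]].

Definition lo (S : {set O}) k := \big[Order.min/1]_(o in S) x o k.
Definition hi (S : {set O}) k := \big[Order.max/0]_(o in S) x o k.
Definition width S k := hi S k - lo S k.

Definition box_convex (S : {set O}) := forall o,
  (forall k, exists2 a, a \in S & x a k <= x o k) ->
  (forall k, exists2 b, b \in S & x o k <= x b k) -> o \in S.

Implicit Types (S A B : {set O}) (o a b : O) (k : 'I_p).

Lemma lo_le S o k : o \in S -> lo S k <= x o k.
Proof. exact: bigmin_le_cond. Qed.

Lemma le_hi S o k : o \in S -> x o k <= hi S k.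
Proof. exact: le_bigmax_cond. Qed.

Lemma lo_ge0 S k : 0 <= lo S k.
Proof. by apply: le_bigmin => // o _; case/andP: (x01 o k). Qed.

Lemma hi_le1 S k : hi S k <= 1.
Proof. by apply: bigmax_le => // o _; case/andP: (x01 o k). Qed.

Lemma lo_attained S o k : o \in S -> exists2 a, a \in S & lo S k = x a k.
Proof.
move=> oS; have [a aS lo_a] := eq_bigmin (x := 1) o (fun a => a \in S) (fun a => x a k) oS
  (fun a _ => (andP (x01 a k)).2).
by exists a.
Qed.

Lemma hi_attained S o k : o \in S -> exists2 b, b \in S & hi S k = x b k.
Proof.
move=> oS; have [b bS hi_b] := eq_bigmax (x := 0) o (fun b => b \in S) (fun b => x b k) oS
  (fun b _ => (andP (x01 b k)).1).
by exists b.
Qed.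

Lemma lo_subset A S k : A \subset S -> lo S k <= lo A k.
Proof.
move=> /fintype.subsetP AS; apply: le_bigmin => [|o oA]; first exact: bigmin_le_id.
exact/lo_le/AS.
Qed.

Lemma hi_subset A S k : A \subset S -> hi A k <= hi S k.
Proof.
move=> /fintype.subsetP AS; apply: bigmax_le => [|o oA]; first exact: bigmax_ge_id.
exact/le_hi/AS.
Qed.

Lemma width_ge0 S o k : o \in S -> 0 <= width S k.
Proof. by move=> oS; rewrite subr_ge0 (le_trans (lo_le k oS) (le_hi k oS)). Qed.

Lemma width_le1 S k : width S k <= 1.
Proof. by have := lo_ge0 S k; have := hi_le1 S k; rewrite /width; lra. Qed.

Lemma width_subset A S k : A \subset S -> width A k <= width S k.
Proof. by move=> AS; apply: lerB; [exact: hi_subset | exact: lo_subset]. Qed.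

Lemma dist_le_width S a b k : a \in S -> b \in S -> `|x a k - x b k| <= width S k.
Proof.
move=> aS bS; have := lo_le k aS; have := lo_le k bS.
have := le_hi k aS; have := le_hi k bS; rewrite /width ler_norml; lra.
Qed.

Lemma width_split S A B a b j : A \subset S -> B \subset S -> a \in A -> b \in B ->
  (forall a b, a \in A -> b \in B -> x a j <= x b j) ->
  width A j + width B j <= width S j.
Proof.
move=> AS BS aA bB AB; rewrite /width.
have [a' a'A ->] := hi_attained j aA; have [b' b'B ->] := lo_attained j bB.
have := AB _ _ a'A b'B; have := lo_subset j AS; have := hi_subset j BS; lra.
Qed.

Lemma box_hull S : S \subset box (lo S) (hi S).
Proof.
by apply/fintype.subsetP => o oS; rewrite inE; apply/forallP => k; rewrite lo_le ?le_hi.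
Qed.

Lemma box_convex_hull S s : box_convex S -> s \in S -> box (lo S) (hi S) \subset S.
Proof.
move=> convS sS; apply/fintype.subsetP => o; rewrite inE => /forallP inbox; apply: convS => k.
  by have [a aS eq_a] := lo_attained k sS; exists a; rewrite // -eq_a; case/andP: (inbox k).
by have [b bS eq_b] := hi_attained k sS; exists b; rewrite // -eq_b; case/andP: (inbox k).
Qed.

Lemma box_convexT : box_convex [set: O].
Proof. by move=> o; rewrite inE. Qed.

Lemma box_convexI A B : box_convex A -> box_convex B -> box_convex (A :&: B).
Proof.
move=> convA convB o lo_o hi_o; rewrite inE; apply/andP; split.
  apply: convA => k; [have [a] := lo_o k | have [a] := hi_o k];
    by rewrite inE => /andP[aA _]; exists a.
apply: convB => k; [have [a] := lo_o k | have [a] := hi_o k];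
  by rewrite inE => /andP[_ aB]; exists a.
Qed.

Lemma box_convex_le j t : box_convex [set o | x o j <= t].
Proof.
move=> o _ hi_o; rewrite inE; have [b] := hi_o j.
by rewrite inE => /[swap]; apply: le_trans.
Qed.

Lemma box_convex_gt j t : box_convex [set o | t < x o j].
Proof.
move=> o lo_o _; rewrite inE; have [a] := lo_o j.
by rewrite inE => /lt_le_trans; apply.
Qed.

Variables (N cund cbar e alpha : R).
Hypothesis cover : forall a b : 'I_p -> R,
  (forall k, 0 <= a k) -> (forall k, a k <= b k) -> (forall k, b k <= 1) ->
  cund * \prod_k (b k - a k) - e <= #|box a b|%:R / N /\
  #|box a b|%:R / N <= cbar * \prod_k (b k - a k) + e.
Hypotheses (N_gt0 : 0 < N) (alpha_gt0 : 0 < alpha) (alpha_le1 : alpha <= 1)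
  (cund_gt0 : 0 < cund) (cund_le_cbar : cund <= cbar).

Lemma cover_hull S s : s \in S ->
  cund * \prod_k width S k - e <= #|box (lo S) (hi S)|%:R / N /\
  #|box (lo S) (hi S)|%:R / N <= cbar * \prod_k width S k + e.
Proof.
move=> sS; apply: cover => k; [exact: lo_ge0 | | exact: hi_le1].
exact: le_trans (lo_le k sS) (le_hi k sS).
Qed.

(* Compare the lower coverage bound on [S] with the upper one on [B]: the bounding box
   of [B] lies within that of [S] in every direction other than [j]. *)
Lemma heavy_subset_wide S B b j : box_convex S -> B \subset S -> b \in B ->
  alpha * #|S|%:R <= #|B|%:R -> 2 * e <= alpha * (#|S|%:R / N) ->
  alpha * cund / (4 * cbar) * width S j <= width B j.
Proof.
move=> convS BS bB heavy small_e.
have bS : b \in S by exact: (fintype.subsetP BS).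
set A := #|S|%:R / N in small_e.
set P := \prod_(k < p | k != j) width S k.
have P_ge0 : 0 <= P by apply: prodr_ge0 => k _; exact: width_ge0 bS.
have wB_ge0 : 0 <= width B j by exact: width_ge0 bB.
have A_gt0 : 0 < A by rewrite divr_gt0 // ltr0n; apply/card_gt0P; exists b.
have cbar_gt0 : 0 < cbar by exact: lt_le_trans cund_le_cbar.
have cover_S : cund * (width S j * P) - e <= A.
  have [low _] := cover_hull bS; rewrite (bigD1 j) //= in low.
  apply: le_trans low _; rewrite ler_pM2r ?invr_gt0 // ler_nat.
  by apply: subset_leq_card; exact: box_convex_hull bS.
have cover_B : alpha * A <= cbar * (width B j * P) + e.
  have [_ up] := cover_hull bB.
  have volB : \prod_k width B k <= width B j * P.
    rewrite (bigD1 j) //=; apply: ler_wpM2l => //.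
    apply: ler_prod => k _; rewrite (width_ge0 _ bB) /=; exact: width_subset.
  apply: le_trans (le_trans _ up) _.
    rewrite /A mulrA ler_pM2r ?invr_gt0 //; apply: le_trans heavy _.
    by rewrite ler_nat; apply: subset_leq_card; exact: box_hull.
  by rewrite lerD2r ler_pM2l.
have P_gt0 : 0 < P.
  rewrite lt0r P_ge0 andbT; apply: contraTneq cover_B => ->.
  rewrite !mulr0 add0r -ltNge; have := mulr_gt0 alpha_gt0 A_gt0; lra.
have alphaA_le : alpha * A <= A by rewrite ler_piMl // ltW.
have S_thin : cund * (width S j * P) <= 2 * A by lra.
have B_fat : alpha * A <= 2 * (cbar * (width B j * P)) by lra.
have key : alpha * cund * width S j <= 4 * cbar * width B j.
  rewrite -(ler_pM2r P_gt0); have := ler_wpM2l (ltW alpha_gt0) S_thin.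
  rewrite -!mulrA; lra.
by rewrite mulrAC ler_pdivrMr ?mulr_gt0 //; lra.
Qed.

End BoundingBox.

Section FairPaths.
Variables (R : realType) (p : nat) (pi : R).

Definition fair_at (hist : seq 'I_p) (j : 'I_p) :=
  pi * p%:R <= (size hist)%:R ->
  (exists k, unused_recent pi hist k) -> unused_recent pi hist j.

(* [path] lists, top-down, the covariates split on below a node whose ancestors split
   on [hist], most recent first; each split is judged against all its ancestors. *)
Definition fair_path (hist path : seq 'I_p) :=
  forall pre j suf, path = pre ++ j :: suf -> fair_at (rev pre ++ hist) j.

Lemma fair_path_nil hist : fair_path hist [::].
Proof. by case. Qed.

Lemma fair_path_cons hist j path :
  fair_at hist j -> fair_path (j :: hist) path -> fair_path hist (j :: path).
Proof.
move=> fair_j fair_path_j [|i pre] k suf /= [<-].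
  by move=> _; exact: fair_j.
by move=> path_eq; rewrite rev_cons cat_rcons; apply: fair_path_j path_eq.
Qed.

Lemma fair_path_nth s h x0 : fair_path [::] s -> (h < size s)%N ->
  fair_at (rev (take h s)) (nth x0 s h).
Proof.
move=> fair_s hs; rewrite -[rev _]cats0; apply: (fair_s _ _ (drop h.+1 s)).
by rewrite -drop_nth // cat_take_drop.
Qed.

Hypothesis pi_gt1 : 1 < pi.

Let F := Num.Def.truncn (pi * p%:R).

Let pi_p_ge0 : 0 <= pi * p%:R.
Proof. by rewrite mulr_ge0 // ltW // (lt_trans ltr01). Qed.

Lemma leq_truncn_pi (i : nat) : (i <= F)%N = (i%:R <= pi * p%:R).
Proof. exact: truncn_ge_nat pi_p_ge0. Qed.

Lemma p_le_truncn_pi : (p <= F)%N.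
Proof. by rewrite leq_truncn_pi ler_peMl // ltW. Qed.

(* With [F = floor (pi * p)], the splits at most [pi * p] generations above position
   [h] are the entries of [s] at positions [h - F, ..., h - 1]. *)
Lemma unused_recent_take (s : seq 'I_p) (h : nat) (k : 'I_p) : (h <= size s)%N ->
  unused_recent pi (rev (take h s)) k <-> (forall i, (h - F <= i < h)%N -> nth k s i != k).
Proof.
move=> hs; have size_h : size (take h s) = h by rewrite size_takel.
split=> [unused i /andP[hi ih] | avoid i].
  have := unused (h - i.+1)%N; rewrite size_rev size_h -leq_truncn_pi.
  rewrite nth_rev size_h; last lia.
  by rewrite nth_take; [rewrite (_ : h - (h - i.+1).+1 = i)%N; [apply; lia | lia] | lia].
rewrite size_rev size_h -leq_truncn_pi => ih iF.
by rewrite nth_rev size_h // nth_take; [apply: avoid | ]; lia.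
Qed.

(* Fairness forces every covariate into every window of [F + p] consecutive
   splits below the root: otherwise the last [p] splits of the window would each
   use a covariate unused in the preceding [F >= p] ones, hence [p] distinct
   covariates other than [j]. *)
Lemma fair_window s j g : fair_path [::] s -> (0 < g)%N -> (g + (F + p) <= size s)%N ->
  j \in take (F + p) (drop g s).
Proof.
move=> fair_s g_gt0 gs; apply: contraT => j_out.
have avoid i : (g <= i < g + (F + p))%N -> nth j s i != j.
  move=> /andP[gi ig]; apply: contra j_out => /eqP <-.
  have -> : nth j s i = nth j (take (F + p) (drop g s)) (i - g).
    by rewrite nth_take ?nth_drop ?(subnKC gi) //; lia.
  by apply: mem_nth; rewrite size_take_min size_drop; move: gs; set m := size s; lia.
have Fp := p_le_truncn_pi.
pose f (i : 'I_p) := nth j s (g + F + i).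
have fresh (i1 i2 : 'I_p) : (i1 < i2)%N -> f i1 != f i2.
  move=> lt12; have i2p := ltn_ord i2.
  have h_lt : (g + F + i2 < size s)%N by lia.
  have := fair_path_nth j fair_s h_lt.
  rewrite /fair_at size_rev size_takel ?(ltnW h_lt) // => fair_h.
  have old_enough : pi * p%:R <= (g + F + i2)%:R.
    by apply/ltW/(lt_le_trans (truncnS_gt _)); rewrite -/F ler_nat; lia.
  have unused := fair_h old_enough.
  have {unused} unused : unused_recent pi (rev (take (g + F + i2) s)) (f i2).
    apply: unused; exists j; apply/unused_recent_take => [|i ?]; [lia | apply: avoid; lia].
  have := (unused_recent_take (f i2) (ltnW h_lt)).1 unused (g + F + i1)%N.
  rewrite (set_nth_default j); last by move: h_lt; set m := size s; lia.
  by rewrite [f i1 == _]eq_sym; apply; lia.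
have f_inj : injective f.
  move=> i1 i2 f12; apply: val_inj; case: (ltngtP i1 i2) => // lt12.
    by have := fresh _ _ lt12; rewrite f12 eqxx.
  by have := fresh _ _ lt12; rewrite f12 eqxx.
have /codomP [i j_fi] := inj_card_onto f_inj (leqnn _) j.
have := avoid (g + F + i)%N; rewrite -/(f i) -j_fi eqxx; apply.
by have := ltn_ord i; lia.
Qed.

Lemma fair_count (s : seq 'I_p) (j : 'I_p) m : fair_path [::] s ->
  (m * (F + p) < size s)%N -> (m <= count_mem j (take (m * (F + p)).+1 s))%N.
Proof.
move=> fair_s; elim: m => [|m IHm] long //; rewrite mulSn in long.
have -> : ((m.+1 * (F + p)).+1 = (m * (F + p)).+1 + (F + p))%N by rewrite mulSn; lia.
rewrite takeD count_cat.
have fits : ((m * (F + p)).+1 + (F + p) <= size s)%N by lia.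
have := fair_window j fair_s (ltn0Sn _) fits; rewrite -has_pred1 has_count.
have short : (m * (F + p) < size s)%N by lia.
by have := IHm short; lia.
Qed.

Lemma fair_count_take (s : seq 'I_p) (j : 'I_p) L : fair_path [::] s ->
  (minn L (size s))%:R <= (count_mem j (take L s)).+1%:R * ((pi + 1) * p%:R).
Proof.
move=> fair_s; set c := count_mem j (take L s).
have nat_bound : (minn L (size s) <= c.+1 * (F + p))%N.
  rewrite leqNgt; apply/negP => long.
  have fits : (c.+1 * (F + p) < size s)%N by lia.
  have le_L : ((c.+1 * (F + p)).+1 <= L)%N by lia.
  have := fair_count j fair_s fits; rewrite -(take_takel s le_L).
  move=> /leq_trans/(_ (leq_count_subseq _ (take_subseq _ _))); lia.
apply: le_trans (_ : _ <= (c.+1 * (F + p))%:R) _; first by rewrite ler_nat.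
by rewrite natrM natrD mulrDl mul1r ler_wpM2l // lerD2r -leq_truncn_pi.
Qed.

End FairPaths.

Section TreeContraction.
Variables (R : realType) (n T p q : nat).
Variables (X : 'I_n -> 'I_T -> 'I_p -> R) (W : 'I_q -> 'I_n -> 'I_T -> bool).
Variables (alpha pi cund cbar e : R) (K : nat).

Let x (o : obs n T) := X o.1 o.2.

Implicit Types (S C : {set obs n T}) (hist : seq 'I_p) (j : 'I_p) (lf : {set obs n T} * nat).

Hypothesis X01 : forall z t k, 0 <= X z t k <= 1.
Hypothesis cover : forall a b : 'I_p -> R,
  (forall k, 0 <= a k) -> (forall k, a k <= b k) -> (forall k, b k <= 1) ->
  cund * \prod_k (b k - a k) - e <= #|box x a b|%:R / (n * T)%:R /\
  #|box x a b|%:R / (n * T)%:R <= cbar * \prod_k (b k - a k) + e.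
Hypotheses (NT_gt0 : (0 < n * T)%N) (alpha_gt0 : 0 < alpha) (alpha_le1 : alpha <= 1)
  (cund_gt0 : 0 < cund) (cund_le_cbar : cund <= cbar).
Hypothesis noise_small : forall h, (h < K)%N -> 2 * e <= alpha ^+ h.+1.

Let x01 o k : 0 <= x o k <= 1. Proof. exact: X01. Qed.
Let beta := alpha * cund / (4 * cbar).

Lemma box_convex_left S j t : box_convex x S -> box_convex x (left_set X S j t).
Proof. by move=> convS; rewrite /left_set setIdE; apply/box_convexI/box_convex_le. Qed.

Lemma box_convex_right S j t : box_convex x S -> box_convex x (right_set X S j t).
Proof. by move=> convS; rewrite /right_set setIdE; apply/box_convexI/box_convex_gt. Qed.

Let one_sub_beta_ge0 : 0 <= 1 - beta.
Proof.
have cbar_gt0 : 0 < cbar by exact: lt_le_trans cund_le_cbar.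
rewrite subr_ge0 ler_pdivrMr ?mulr_gt0 // mul1r.
have : alpha * cund <= 1 * cbar by rewrite ler_pM // ltW.
lra.
Qed.

Lemma left_set_subset S j t : left_set X S j t \subset S.
Proof. by apply/fintype.subsetP => o; rewrite inE => /andP[]. Qed.

Lemma right_set_subset S j t : right_set X S j t \subset S.
Proof. by apply/fintype.subsetP => o; rewrite inE => /andP[]. Qed.

Lemma split_contracts S j t l r : box_convex x S ->
  l \in left_set X S j t -> r \in right_set X S j t ->
  alpha * #|S|%:R <= #|left_set X S j t|%:R -> alpha * #|S|%:R <= #|right_set X S j t|%:R ->
  2 * e <= alpha * (#|S|%:R / (n * T)%:R) ->
  width x (left_set X S j t) j <= (1 - beta) * width x S j /\
  width x (right_set X S j t) j <= (1 - beta) * width x S j.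
Proof.
move=> convS lL rR heavyL heavyR small_e.
have LS := left_set_subset S j t; have RS := right_set_subset S j t.
have sep a b : a \in left_set X S j t -> b \in right_set X S j t -> x a j <= x b j.
  by rewrite !inE => /andP[_ ha] /andP[_ hb]; exact/ltW/(le_lt_trans ha).
have NT : 0 < (n * T)%:R :> R by rewrite ltr0n.
have wide :=
  heavy_subset_wide x01 cover NT alpha_gt0 alpha_le1 cund_gt0 cund_le_cbar j convS.
have := wide _ _ LS lL heavyL small_e; have := wide _ _ RS rR heavyR small_e.
have := width_split x01 LS RS lL rR sep; rewrite -/beta; lra.
Qed.

(* [path] lists the covariates split on from [C], at depth [h], down to the leaf [lf];
   only the first [K - h] of them are guaranteed to contract. *)
Definition fair_shrinking_path (C : {set obs n T}) h hist (lf : {set obs n T} * nat) :=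
  exists path, [/\ fair_path pi hist path, (h + size path)%N = lf.2 &
    forall k, width x lf.1 k <= width x C k * (1 - beta) ^+ count_mem k (take (K - h) path)].

Lemma fair_shrinking_path_step S C h hist j lf : C \subset S ->
  ((h < K)%N -> width x C j <= (1 - beta) * width x S j) -> fair_at pi hist j ->
  fair_shrinking_path C h.+1 (j :: hist) lf -> fair_shrinking_path S h hist lf.
Proof.
move=> CS contract fair_j [path [fair_p size_p width_p]].
exists (j :: path); split; [exact: fair_path_cons | by rewrite /= addnS | move=> k].
apply: le_trans (width_p k) _; have rho_k_ge0 := exprn_ge0 _ one_sub_beta_ge0.
have [hK | Kh] := ltnP h K; last first.
  have -> : (K - h = 0)%N by lia.
  have -> : (K - h.+1 = 0)%N by lia.
  by rewrite !take0 expr0 !mulr1; exact: width_subset.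
rewrite -(subnSK hK) /=; case: (eqVneq j k) => [<- | jk].
  by rewrite add1n exprS mulrA ler_wpM2r // mulrC contract.
by rewrite add0n ler_wpM2r // width_subset.
Qed.

Lemma leaves_fair_shrinking_path t : forall S h hist,
  regular X W alpha t S -> fair_split pi t hist -> box_convex x S ->
  alpha ^+ h * (n * T)%:R <= #|S|%:R ->
  forall lf, lf \in leaves X t S h -> fair_shrinking_path S h hist lf.
Proof.
elim: t => [|j t l IHl r IHr] S h hist /=.
  move=> _ _ _ _ lf; rewrite inE => /eqP -> /=.
  exists [::]; split; [exact: fair_path_nil | by rewrite addn0 |].
  by move=> k /=; rewrite expr0 mulr1.
move=> [[heavyL heavyR _ _] [regL regR]] [fair_j fairL fairR] convS large lf.
have NT : 0 < (n * T)%:R :> R by rewrite ltr0n.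
have S_gt0 : 0 < #|S|%:R :> R by apply: lt_le_trans large; rewrite mulr_gt0 ?exprn_gt0.
have child_large C : alpha * #|S|%:R <= #|C|%:R -> alpha ^+ h.+1 * (n * T)%:R <= #|C|%:R.
  by move=> heavy; apply: le_trans heavy; rewrite exprS -mulrA ler_wpM2l // ltW.
have child_mem C : alpha * #|S|%:R <= #|C|%:R -> exists c, c \in C.
  move=> heavy; apply/card_gt0P; rewrite -(ltr0n R); apply: lt_le_trans heavy.
  exact: mulr_gt0.
have [l' lL] := child_mem _ heavyL; have [r' rR] := child_mem _ heavyR.
have contract : (h < K)%N ->
    width x (left_set X S j t) j <= (1 - beta) * width x S j /\
    width x (right_set X S j t) j <= (1 - beta) * width x S j.
  move=> hK; apply: split_contracts convS lL rR heavyL heavyR _.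
  apply: le_trans (noise_small hK) _.
  by rewrite exprS ler_wpM2l ?(ltW alpha_gt0) // ler_pdivlMr.
rewrite mem_cat => /orP[lf_in | lf_in].
  apply: (fair_shrinking_path_step (left_set_subset S j t) (fun hK => (contract hK).1) fair_j).
  exact: IHl _ _ _ regL fairL (box_convex_left convS) (child_large _ heavyL) _ lf_in.
apply: (fair_shrinking_path_step (right_set_subset S j t) (fun hK => (contract hK).2) fair_j).
exact: IHr _ _ _ regR fairR (box_convex_right convS) (child_large _ heavyR) _ lf_in.
Qed.

Lemma root_leaves_fair_shrinking_path t :
  regular X W alpha t [set: obs n T] -> fair_split pi t [::] ->
  forall lf, lf \in leaves X t [set: obs n T] 0 ->
  exists path, [/\ fair_path pi [::] path, size path = lf.2 &
    forall k, width x lf.1 k <= (1 - beta) ^+ count_mem k (take K path)].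
Proof.
move=> reg fair lf lf_in.
have [|path [fair_p size_p width_p]] :=
  leaves_fair_shrinking_path reg fair (box_convexT (x := x)) _ lf_in.
  by rewrite expr0 mul1r cardsT card_prod !card_ord.
exists path; split=> // k; apply: le_trans (width_p k) _.
by rewrite subn0 ler_piMl ?exprn_ge0 ?width_le1.
Qed.

End TreeContraction.

Lemma size_leaves_gt0 (R : realType) n T p (X : 'I_n -> 'I_T -> 'I_p -> R) t S d :
  (0 < size (leaves X t S d))%N.
Proof.
elim: t S d => [//|j x l IHl r IHr] S d /=.
by rewrite size_cat addn_gt0 IHl.
Qed.

Lemma lipschitz_ge0 (R : realType) (p : nat) (f : ('I_p -> R) -> R) (Lf : R) : (0 < p)%N ->
  (forall u v : 'I_p -> R, (forall j, 0 <= u j <= 1) -> (forall j, 0 <= v j <= 1) ->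
    `|f u - f v| <= Lf * Num.sqrt (\sum_j (u j - v j) ^+ 2)) ->
  0 <= Lf.
Proof.
move=> p_gt0 lip.
have in0 (j : 'I_p) : 0 <= (0 : R) <= 1 by rewrite lexx ler01.
have in1 (j : 'I_p) : 0 <= (1 : R) <= 1 by rewrite lexx ler01.
have := lip (fun=> 0) (fun=> 1) in0 in1.
rewrite sumr_const card_ord sub0r sqrrN expr1n => /(le_trans (normr_ge0 _)).
by rewrite pmulr_lge0 // sqrtr_gt0 pmulrn_lgt0.
Qed.

Lemma sqrt_sum_sqr_le (R : realType) (p : nat) (u v : 'I_p -> R) (d : R) :
  0 <= d -> (forall j, `|u j - v j| <= d) ->
  Num.sqrt (\sum_j (u j - v j) ^+ 2) <= Num.sqrt p%:R * d.
Proof.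
move=> d_ge0 close; rewrite -(ger0_norm d_ge0) -sqrtr_sqr -sqrtrM // ler_wsqrtr //.
rewrite mulr_natl -[p in _ *+ p]card_ord -sumr_const ler_sum // => j _.
by rewrite -real_normK ?num_real // lerXn2r ?nnegrE.
Qed.

Lemma expn_ge_of_powR_mul_le (R : realType) (alpha c ell E : R) (h : nat) :
  0 < alpha < 1 -> 1 <= ell -> ell `^ (c * ln (1 / alpha)) * E <= alpha ->
  h%:R <= c * ln ell -> E <= alpha ^+ h.+1.
Proof.
move=> /andP[alpha_gt0 alpha_lt1] ell_ge1 noise h_le.
have ln_alpha : ln alpha < 0 by rewrite ln_lt0 ?alpha_gt0.
have ell_gt0 : 0 < ell by exact: lt_le_trans ltr01 ell_ge1.
have pow_eq : ell `^ (c * ln (1 / alpha)) = (expR (c * ln ell * ln alpha))^-1.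
  rewrite /powR gt_eqF // -expRN div1r lnV ?posrE //; congr expR; ring.
move: noise; rewrite pow_eq mulrC -ler_pdivlMr ?invr_gt0 ?expR_gt0 // invrK => noise.
apply: le_trans noise _; rewrite exprS; apply: ler_wpM2l; first exact: ltW.
have -> : alpha ^+ h = expR (h%:R * ln alpha) by rewrite expRM_natl lnK ?posrE.
by rewrite ler_expR ler_wnM2r // ltW.
Qed.

Lemma contraction_pow_le (R : realType) (beta c ell P : R) (m d : nat) :
  0 <= beta <= 1 / 2 -> 0 < P -> 1 <= ell -> 0 <= c -> c * ln ell <= d%:R ->
  (minn (Num.Def.truncn (c * ln ell)).+1 d)%:R <= (m.+1)%:R * P ->
  (1 - beta) ^+ m <= 2 / ell `^ (c / P * beta).
Proof.
move=> /andP[beta_ge0 beta_le] P_gt0 ell_ge1 c_ge0 deep count.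
have ell_gt0 : 0 < ell by exact: lt_le_trans ltr01 ell_ge1.
set D := c * ln ell in deep count.
have D_le : D <= (m.+1)%:R * P.
  apply: le_trans count; rewrite /minn; case: ifP => // _.
  exact/ltW/truncnS_gt.
have one_sub_le : 1 - beta <= expR (- beta) by have := expR_ge1Dx (- beta); lra.
have exp_beta : expR beta <= 2.
  have := ler_wpM2l (ltW (expR_gt0 beta)) one_sub_le.
  rewrite expRN mulfV ?gt_eqF ?expR_gt0 //; have := expR_gt0 beta; nra.
have decay : c / P * beta * ln ell <= beta * (m.+1)%:R.
  have -> : c / P * beta * ln ell = beta * (D / P) by rewrite /D; ring.
  by apply: ler_wpM2l => //; rewrite ler_pdivrMr.
rewrite /powR gt_eqF // -expRN.
apply: le_trans (_ : _ <= expR (- beta) ^+ m) _.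
  by apply: lerXn2r => //; rewrite nnegrE ?expR_ge0 //; lra.
have -> : expR (- beta) ^+ m = expR beta * expR (- (beta * (m.+1)%:R)).
  by rewrite -expRM_natl -expRD -addn1 natrD; congr expR; ring.
by apply: ler_pM; rewrite ?expR_ge0 // ler_expR lerN2.
Qed.

Lemma contraction_rate_bounds (R : realType) (alpha cund cbar : R) :
  0 < alpha -> alpha < 1 / 2 -> 0 < cund -> cund <= cbar ->
  0 <= alpha * cund / (4 * cbar) <= 1 / 2.
Proof.
move=> alpha_gt0 alpha_lt_half cund_gt0 cund_le_cbar; have cbar_gt0 : 0 < cbar by lra.
apply/andP; split; first by rewrite divr_ge0 ?mulr_ge0 // ltW.
by rewrite ler_pdivrMr ?mulr_gt0 //; nra.
Qed.

Theorem theorem1 (R : realType) (n T p q : nat)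
  (X : 'I_n -> 'I_T -> 'I_p -> R) (W : 'I_q -> 'I_n -> 'I_T -> bool)
  (alpha pi c cbar cund cm : R)
  (t : tree R p)
  (Tstar : 'I_q -> ('I_p -> R) -> R) (L : 'I_q -> R) :
  (1 <= n)%N -> (1 <= T)%N -> (1 <= p)%N ->
  0 < alpha -> alpha < 1 / 2 -> 1 < pi -> 0 < c ->
  0 < cund -> cund <= cbar -> 0 < cm ->
  (forall z tt j, 0 <= X z tt j <= 1) ->
  (let M := Num.sqrt (ln (n * T)%:R * (p.+1)%:R / (minn n T)%:R) in
   forall x1 x2 : 'I_p -> R,
     (forall j, 0 <= x1 j) -> (forall j, x1 j <= x2 j) -> (forall j, x2 j <= 1) ->
     let V := \prod_(j < p) (x2 j - x1 j) in
     let frac := #|[set o : ('I_n * 'I_T)%type |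
                     [forall j, (x1 j <= X o.1 o.2 j) && (X o.1 o.2 j <= x2 j)]]|%:R
                 / (n * T)%:R in
     cund * V - cm * M <= frac /\ frac <= cbar * V + cm * M) ->
  regular X W alpha t [set: ('I_n * 'I_T)%type] ->
  fair_split pi t [::] ->
  (let lvs := leaves X t [set: ('I_n * 'I_T)%type] 0 in
   let ell := (size lvs)%:R : R in
   let M := Num.sqrt (ln (n * T)%:R * (p.+1)%:R / (minn n T)%:R) in
   (forall lf, lf \in lvs -> c * ln ell <= (lf.2)%:R) ->
   ell `^ (c * ln (1 / alpha)) * (2 * cm * M) <= alpha ->
   (forall i (x y : 'I_p -> R),
      (forall j, 0 <= x j <= 1) -> (forall j, 0 <= y j <= 1) ->
      `|Tstar i x - Tstar i y| <= L i * Num.sqrt (\sum_(j < p) (x j - y j) ^+ 2)) ->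
   let s := c / ((pi + 1) * p%:R) * (alpha * cund / (4 * cbar)) in
   forall i lf, lf \in lvs ->
     forall o1 o2, o1 \in lf.1 -> o2 \in lf.1 ->
       `|Tstar i (X o1.1 o1.2) - Tstar i (X o2.1 o2.2)|
         <= 2 * L i * Num.sqrt p%:R / ell `^ s).
Proof.
move=> n_ge1 T_ge1 p_ge1 alpha_gt0 alpha_lt_half pi_gt1 c_gt0 cund_gt0 cund_le_cbar _ X01
  cover reg fair lvs ell M deep noise lip s i lf lf_in o1 o2 o1_in o2_in.
have alpha_bounds : 0 < alpha < 1 by rewrite alpha_gt0; lra.
have ell_ge1 : 1 <= ell by rewrite ler1n size_leaves_gt0.
have noise_small h : (h < (Num.Def.truncn (c * ln ell)).+1)%N -> 2 * (cm * M) <= alpha ^+ h.+1.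
  rewrite ltnS mulrA truncn_ge_nat ?mulr_ge0 ?ln_ge0 ?(ltW c_gt0) //.
  exact: expn_ge_of_powR_mul_le alpha_bounds ell_ge1 noise.
have NT_gt0 : (0 < n * T)%N by rewrite muln_gt0 n_ge1 T_ge1.
have alpha_le1 : alpha <= 1 by lra.
have [path [fair_p size_p width_p]] := root_leaves_fair_shrinking_path X01 cover NT_gt0 alpha_gt0
  alpha_le1 cund_gt0 cund_le_cbar noise_small reg fair lf_in.
have beta_bounds := contraction_rate_bounds alpha_gt0 alpha_lt_half cund_gt0 cund_le_cbar.
have width_le k : width (fun o => X o.1 o.2) lf.1 k <= 2 / ell `^ s.
  apply: le_trans (width_p k) _.
  apply: (contraction_pow_le (d := size path) beta_bounds _ ell_ge1 (ltW c_gt0)).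
  - by rewrite mulr_gt0 ?ltr0n //; lra.
  - by rewrite size_p; exact: deep.
  - exact: (@fair_count_take _ _ _ pi_gt1 path k _ fair_p).
have two_div_ge0 : 0 <= 2 / ell `^ s by rewrite divr_ge0 ?powR_ge0.
apply: le_trans (lip i _ _ (X01 o1.1 o1.2) (X01 o2.1 o2.2)) _.
have -> : 2 * L i * Num.sqrt p%:R / ell `^ s = L i * (Num.sqrt p%:R * (2 / ell `^ s)).
  by ring.
apply: ler_wpM2l; first exact: lipschitz_ge0 p_ge1 (lip i).
apply: sqrt_sum_sqr_le two_div_ge0 _ => k.
exact: le_trans (dist_le_width _ k o1_in o2_in) (width_le k).
Qed.
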